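(* Let $p$ be a prime and $n\geq1$. Then $$I_{p^n}=\bigcap_{i=0}^{p^n-1}(p^n,X-i)=\bigcap_{j=0}^{p-1}\mathcal{Q}_{n,j}=\prod_{j=0}^{p-1}\mathcal{Q}_{n,j},$$ where each $\mathcal{Q}_{n,j}$ is $\mathcal{M}_j$-primary, and the middle expression is the minimal primary decomposition of $I_{p^n}$ (its associated primes being exactly the maximal ideals $\mathcal{M}_0,\dots,\mathcal{M}_{p-1}$).
   Context: For a prime $p$ and $n\geq1$, $I_{p^n}=p^n\mathrm{Int}(\mathbb{Z})\cap\mathbb{Z}[X]$, where $\mathrm{Int}(\mathbb{Z})=\{f\in\mathbb{Q}[X]: f(\mathbb{Z})\subseteq\mathbb{Z}\}$; equivalently $I_{p^n}=\{f\in\mathbb{Z}[X] : p^n\mid f(a)\text{ for all }a\in\mathbb{Z}\}$. For $j\in\{0,\dots,p-1\}$, $\mathcal{M}_j=(p,X-j)\subseteq\mathbb{Z}[X]$ and $\mathcal{Q}_{n,j}=\bigcap_{i\in\{0,\dots,p^n-1\},\ i\equiv j \ (\mathrm{mod}\ p)}(p^n,X-i)$, i.e. the set of $f\in\mathbb{Z}[X]$ with $p^n\mid f(i)$ for all integers $i\equiv j\pmod p$. *)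

From HB Require Import structures.
From mathcomp Require Import all_boot all_order all_algebra.
Set Implicit Arguments. Unset Strict Implicit. Unset Printing Implicit Defensive.
Import Order.TTheory GRing.Theory Num.Theory.
Local Open Scope ring_scope.

Definition ideal := {poly int} -> Prop.

Definition I_pn (p n : nat) : ideal :=
  fun f => forall a : int, ((p ^ n)%N%:Z %| f.[a])%Z.

Definition ideal2 (c i : int) : ideal :=
  fun f => exists g h : {poly int}, f = g * c%:P + h * ('X - i%:P).

Definition M_ (p j : nat) : ideal := ideal2 p%:Z j%:Z.

Definition Q_ (p n j : nat) : ideal :=
  fun f => forall i : nat, (i < p ^ n)%N -> (i %% p = j %% p)%N ->
    ideal2 (p ^ n)%N%:Z i%:Z f.

Definition prod_ideal (m : nat) (Q : nat -> ideal) : ideal :=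
  fun f => exists (N : nat) (a : nat -> nat -> {poly int}),
    (forall k j, (k < N)%N -> (j < m)%N -> Q j (a k j)) /\
    f = \sum_(k < N) \prod_(j < m) a k j.

Definition is_ideal (J : ideal) : Prop :=
  J 0 /\ (forall f g, J f -> J g -> J (f + g)) /\
  (forall f g, J g -> J (f * g)).

Definition radical (J : ideal) : ideal := fun f => exists k : nat, J (f ^+ k).

Definition primary (J : ideal) : Prop :=
  is_ideal J /\ ~ J 1 /\
  (forall a b, J (a * b) -> J a \/ exists k : nat, J (b ^+ k)).

Definition primary_for (M J : ideal) : Prop :=
  primary J /\ forall f, radical J f <-> M f.

Definition maximal_ideal (M : ideal) : Prop :=
  is_ideal M /\ ~ M 1 /\
  forall J : ideal, is_ideal J -> (forall f, M f -> J f) ->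
    (forall f, J f -> M f) \/ J 1.

Definition min_primary_decomp (I : ideal) (m : nat) (Q : nat -> ideal) : Prop :=
  (forall f, I f <-> forall j, (j < m)%N -> Q j f) /\
  (forall j, (j < m)%N -> primary (Q j)) /\
  (forall j k, (j < k)%N -> (k < m)%N ->
     ~ (forall f, radical (Q j) f <-> radical (Q k) f)) /\
  (forall j, (j < m)%N ->
     ~ (forall f, (forall k, (k < m)%N -> k <> j -> Q k f) -> Q j f)).

From HB Require Import structures.
From mathcomp Require Import all_boot all_order all_algebra cyclic.
From mathcomp Require Import ring.
From Stdlib Require Import Classical FunctionalExtensionality PropExtensionality.
Set Implicit Arguments. Unset Strict Implicit. Unset Printing Implicit Defensive.
Import Order.TTheory GRing.Theory Num.Theory.
Local Open Scope ring_scope.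

(* Everything is reduced to divisibility of values: since a - b divides
   f(a) - f(b), membership in (c, X - i) means c | f(i) (factor theorem), the
   value f(a) mod d depends only on a mod d, and so
   - I_{p^n} is the intersection of the (p^n, X - i), 0 <= i < p^n;
   - Q_{n,j} is the "class ideal" of the f with p^n | f(a) whenever
     a = j (mod p), and M_j is the "evaluation ideal" of the f with p | f(j).
   A class ideal is primary with radical M_j: if p does not divide g(j) then
   g(a) is prime to p^n on the whole class, and otherwise g^n is in it.
   For the product, Euler's theorem makes (X - k)^phi(p^n) congruent to 1
   modulo p^n off the class of k; the product of these over k <> j is an
   "indicator" of the class of j.  The indicators sum to 1 modulo p^n, and a
   geometric series turns this into an explicit expression of any element of
   the intersection as a sum of products.  The indicators also show that no
   component of the decomposition is redundant. *)

Lemma ideal_ext (I J : ideal) : (forall f, I f <-> J f) -> I = J.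
Proof.
by move=> IJ; apply: functional_extensionality => f; apply: propositional_extensionality.
Qed.

Lemma dvdz_hornerB (f : {poly int}) (a b : int) : (a - b %| f.[a] - f.[b])%Z.
Proof.
elim/poly_ind: f => [|f c IHf]; first by rewrite !horner0 subrr dvdz0.
rewrite !hornerMXaddC.
have -> : f.[a] * a + c - (f.[b] * b + c) = (f.[a] - f.[b]) * a + f.[b] * (a - b) by ring.
by apply: rpredD; [apply: dvdz_mulr | apply: dvdz_mull].
Qed.

Lemma dvdz_horner_congr (d a b : int) (f : {poly int}) :
  (d %| a - b)%Z -> (d %| f.[b])%Z = (d %| f.[a])%Z.
Proof.
move=> dab; have dfab := dvdz_trans dab (dvdz_hornerB f a b).
by rewrite -(subrK f.[b] f.[a]) (rpredDl _ dfab).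
Qed.

(* Factor theorem: f lies in (c, X - i) exactly when c divides f(i). *)
Lemma ideal2E (c i : int) (f : {poly int}) : ideal2 c i f <-> (c %| f.[i])%Z.
Proof.
split=> [[g [h ->]]|/dvdzP[m fi]].
  by rewrite !hornerE subrr mulr0 addr0 dvdz_mull.
have : root (f - f.[i]%:P) i by rewrite /root !hornerE subrr.
case/factor_theorem=> q fq; exists m%:P, q.
by rewrite -fq -polyCM -fi; ring.
Qed.

Lemma exists_residue (d : nat) (a : int) : (0 < d)%N ->
  exists2 i : nat, (i < d)%N & (d%:Z %| a - i%:Z)%Z.
Proof.
move=> d_gt0; have d_neq0 : d%:Z != 0 by rewrite eqz_nat -lt0n.
exists `|(a %% d)%Z|%N; last first.
  by rewrite gez0_abs ?modz_ge0 // {1}(divz_eq a d) addrK dvdz_mull.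
by rewrite -ltz_nat gez0_abs ?modz_ge0 // ltz_pmod // ltz_nat.
Qed.

Lemma PoszX (m k : nat) : (m ^ k)%N%:Z = m%:Z ^+ k.
Proof. by rewrite -!natz natrX. Qed.

Lemma euler_totientz (d : nat) (x : int) : (0 < d)%N -> coprimez x d ->
  (d%:Z %| x ^+ totient d - 1)%Z.
Proof.
move=> d_gt0 xd; have d_neq0 : d%:Z != 0 by rewrite eqz_nat -lt0n.
set r := `|(x %% d)%Z|%N.
have xr : (x %% d)%Z = r by rewrite gez0_abs ?modz_ge0.
have rd : coprime r d by rewrite -[coprime _ _]/(coprimez r d) -xr /coprimez gcdz_modl.
rewrite -eqz_mod_dvd -modzXm xr.
by rewrite -PoszX -[1]/(Posz 1) !modz_nat (Euler_exp_totient rd).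
Qed.

Lemma eqn_modz (m i j : nat) : (i %% m = j %% m)%N <-> (m%:Z %| i%:Z - j%:Z)%Z.
Proof. by rewrite -eqz_mod_dvd !modz_nat; split=> [->|/eqP[]]. Qed.

Lemma values_dvdE (d : nat) (f : {poly int}) : (0 < d)%N ->
  (forall a : int, (d%:Z %| f.[a])%Z) <->
  (forall i : nat, (i < d)%N -> ideal2 d%:Z i%:Z f).
Proof.
move=> d_gt0; split=> [df i _|df a]; first exact/ideal2E.
have [i lt_id dai] := exists_residue a d_gt0.
by rewrite -(dvdz_horner_congr _ dai); apply/ideal2E/df.
Qed.

Definition class_ideal (p n j : nat) : ideal :=
  fun f => forall a : int, (p%:Z %| a - j%:Z)%Z -> ((p ^ n)%N%:Z %| f.[a])%Z.

Definition eval_ideal (p j : nat) : ideal := fun f => (p%:Z %| f.[j%:Z])%Z.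

(* The residues i < p^n of the class of j represent all a = j (mod p). *)
Lemma Q_E (p n j : nat) : (0 < p)%N -> (0 < n)%N -> Q_ p n j = class_ideal p n j.
Proof.
move=> p_gt0 n_gt0; apply: ideal_ext => f; split=> [Qf a paj|Cf i _ /eqn_modz pij].
  have pn_gt0 : (0 < p ^ n)%N by rewrite expn_gt0 p_gt0.
  have [i lt_ipn dai] := exists_residue a pn_gt0.
  have pai : (p%:Z %| a - i%:Z)%Z.
    by apply: dvdz_trans dai; rewrite dvdzE /= dvdn_exp.
  rewrite -(dvdz_horner_congr _ dai); apply/ideal2E/Qf => //; apply/eqn_modz.
  by have := rpredB paj pai; rewrite opprB addrC addrA subrK.
exact/ideal2E/Cf.
Qed.

Lemma M_E (p j : nat) : M_ p j = eval_ideal p j.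
Proof. by apply: ideal_ext => f; apply: ideal2E. Qed.

Section ClassIdeals.

Variables p n : nat.
Hypothesis p_prime : prime p.
Hypothesis n_gt0 : (0 < n)%N.

Lemma class_ideal_is_ideal (j : nat) : is_ideal (class_ideal p n j).
Proof.
split; first by move=> a _; rewrite horner0 dvdz0.
split=> [f g Cf Cg a paj|f g Cg a paj]; first by rewrite hornerD rpredD ?Cf ?Cg.
by rewrite hornerM dvdz_mull ?Cg.
Qed.

Lemma eval_ideal_is_ideal (j : nat) : is_ideal (eval_ideal p j).
Proof.
rewrite /eval_ideal; split; first by rewrite horner0 dvdz0.
by split=> [f g pf pg|f g pg]; rewrite ?hornerD ?hornerM ?rpredD ?dvdz_mull.
Qed.

Lemma dvdz_p_pn (x : int) : ((p ^ n)%N%:Z %| x)%Z -> (p%:Z %| x)%Z.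
Proof. by apply: dvdz_trans; rewrite dvdzE /= dvdn_exp. Qed.

(* If p | b(j) then p | b(a) on the class of j, so b^n lies in class_ideal. *)
Lemma class_ideal_exp (j : nat) (b : {poly int}) :
  eval_ideal p j b -> class_ideal p n j (b ^+ n).
Proof.
move=> pbj a paj; rewrite horner_exp PoszX dvdz_exp2r //.
by rewrite -(dvdz_horner_congr _ paj).
Qed.

Lemma class_ideal_proper (j : nat) : ~ class_ideal p n j 1.
Proof.
move/(_ j%:Z); rewrite subrr dvdz0 hornerC => /(_ isT)/dvdz_p_pn.
by rewrite dvdzE /= Euclid_dvd1.
Qed.

(* If p does not divide b(j), then b(a) is a unit modulo p^n on the whole
   class a = j (mod p); hence class_ideal is primary. *)
Lemma class_ideal_primary (j : nat) : primary (class_ideal p n j).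
Proof.
split; first exact: class_ideal_is_ideal.
split; first exact: class_ideal_proper.
move=> f g Cfg; have [pgj|npgj] := boolP (p%:Z %| g.[j%:Z])%Z.
  by right; exists n; apply: class_ideal_exp.
left=> a paj; rewrite -(@Gauss_dvdzl _ _ g.[a]) -?hornerM ?Cfg //.
rewrite coprimezE /= coprimeXl // prime_coprime //.
by rewrite -[(p %| `|_|)%N]/(p%:Z %| g.[a])%Z -(dvdz_horner_congr _ paj).
Qed.

Lemma class_ideal_radical (j : nat) (f : {poly int}) :
  radical (class_ideal p n j) f <-> eval_ideal p j f.
Proof.
split=> [[k Cfk]|pfj]; last by exists n; apply: class_ideal_exp.
move: (Cfk j%:Z); rewrite subrr dvdz0 horner_exp => /(_ isT)/dvdz_p_pn.
by rewrite /eval_ideal !dvdzE /= abszX Euclid_dvdX // => /andP[].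
Qed.

(* Modulo (p, X - j) every polynomial reduces to the constant f(j); an
   ideal containing an f with p not dividing f(j) then contains 1 by Bezout. *)
Lemma eval_ideal_maximal (j : nat) : maximal_ideal (eval_ideal p j).
Proof.
split; first exact: eval_ideal_is_ideal.
split; first by rewrite /eval_ideal hornerC dvdzE /= Euclid_dvd1.
move=> J [J0 [JD JM]] MJ.
have [[f [Jf nMf]]|] := classic (exists f, J f /\ ~ eval_ideal p j f); last first.
  by move=> noJ; left=> f Jf; apply: NNPP => nMf; apply: noJ; exists f.
right; set c := f.[j%:Z].
have : root (f - c%:P) j%:Z by rewrite /root !hornerE subrr.
case/factor_theorem=> q fq.
have Jc : J c%:P.
  have -> : c%:P = f + (- q) * ('X - (j%:Z)%:P) by rewrite mulNr -fq; ring.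
  by apply: JD => //; apply: JM; apply: MJ; rewrite /eval_ideal !hornerE subrr dvdz0.
have [u [v uv]] := Bezoutz p c.
have /eqP pc : coprimez p c by rewrite coprimezE /= prime_coprime //; apply/negP.
have -> : 1 = (u * p)%:P + v%:P * c%:P by rewrite -polyCM -polyCD uv pc.
by apply: JD; [apply: MJ; rewrite /eval_ideal hornerC dvdz_mull | apply: JM].
Qed.

(* phi(p^n) = p^(n-1) (p - 1) >= n: the class factors below vanish to order n. *)
Lemma n_le_totient : (n <= totient (p ^ n))%N.
Proof.
rewrite totient_pfactor // -{1}(prednK n_gt0).
apply: leq_trans (ltn_expl _ (prime_gt1 p_prime)) _.
by rewrite leq_pmull // -ltnS prednK ?prime_gt0 ?prime_gt1.
Qed.

(* (X - k)^phi(p^n) vanishes modulo p^n on the class of k and, by Euler,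
   is congruent to 1 modulo p^n everywhere else. *)
Definition class_factor (k : nat) : {poly int} := ('X - (k%:Z)%:P) ^+ totient (p ^ n).

Lemma class_factor_in (k : nat) : class_ideal p n k (class_factor k).
Proof.
move=> a pak; rewrite horner_exp hornerXsubC PoszX.
exact: dvdz_trans (dvdz_exp2r n pak) (dvdz_exp2l _ n_le_totient).
Qed.

Lemma class_factor_unit (k : nat) (a : int) : ~~ (p%:Z %| a - k%:Z)%Z ->
  ((p ^ n)%N%:Z %| (class_factor k).[a] - 1)%Z.
Proof.
move=> npak; rewrite horner_exp hornerXsubC euler_totientz ?expn_gt0 ?prime_gt0 //.
by rewrite coprimez_sym coprimezE /= coprimeXl // prime_coprime.
Qed.

Lemma residues_distinct (a : int) (j k : nat) : (j < p)%N -> (k < p)%N -> j != k ->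
  (p%:Z %| a - j%:Z)%Z -> ~~ (p%:Z %| a - k%:Z)%Z.
Proof.
move=> lt_jp lt_kp neq_jk paj; apply: contra neq_jk => pak.
have : (p%:Z %| j%:Z - k%:Z)%Z.
  by have := rpredB pak paj; rewrite opprB addrC addrA subrK.
by move/eqn_modz; rewrite !modn_small // => ->.
Qed.

(* The product of the class factors of all classes other than j: it lies in
   every component class_ideal k, k <> j, and is 1 modulo p^n on class j. *)
Definition class_indicator (j : nat) : {poly int} :=
  \prod_(k < p | (k : nat) != j) class_factor k.

Lemma class_indicator_other (j k : nat) : (k < p)%N -> k != j ->
  class_ideal p n k (class_indicator j).
Proof.
move=> lt_kp neq_kj; rewrite /class_indicator (bigD1 (Ordinal lt_kp)) //= mulrC.
by have [_ [_ CM]] := class_ideal_is_ideal k; apply: CM; apply: class_factor_in.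
Qed.

Lemma class_indicator_one (j : nat) (a : int) : (j < p)%N -> (p%:Z %| a - j%:Z)%Z ->
  ((p ^ n)%N%:Z %| (class_indicator j).[a] - 1)%Z.
Proof.
move=> lt_jp paj; rewrite /class_indicator horner_prod.
apply: (big_ind (fun x => ((p ^ n)%N%:Z %| x - 1)%Z)); first by rewrite subrr dvdz0.
  move=> x y x1 y1; have -> : x * y - 1 = (x - 1) * y + (y - 1) by ring.
  by rewrite rpredD ?dvdz_mulr.
by move=> k neq_kj; rewrite class_factor_unit // (residues_distinct lt_jp) // eq_sym.
Qed.

Lemma class_indicator_notin (j : nat) : (j < p)%N -> ~ class_ideal p n j (class_indicator j).
Proof.
move=> lt_jp Cj; apply: (@class_ideal_proper j) => a paj; rewrite hornerC.
have := rpredB (Cj a paj) (class_indicator_one lt_jp paj).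
by rewrite opprB addrC subrK.
Qed.

(* Summing the indicators gives 1 modulo p^n at every integer, so the
   complement of the sum lies in all components (indeed in I_{p^n}). *)
Definition indicator_sum : {poly int} := \sum_(j < p) class_indicator j.

Lemma indicator_sum_complement (r : nat) : (r < p)%N ->
  class_ideal p n r (1 - indicator_sum).
Proof.
move=> lt_rp a par; rewrite /indicator_sum (bigD1 (Ordinal lt_rp)) //= opprD addrA.
rewrite hornerD hornerN rpredB //.
  by rewrite hornerD hornerN hornerC -opprB rpredN class_indicator_one.
rewrite horner_sum; apply: rpred_sum => k neq_kr.
have neq_rk : r != k by rewrite eq_sym.
exact: (class_indicator_other lt_rp neq_rk).
Qed.

End ClassIdeals.

Section ProductIdeal.

Variables (m : nat) (Q : nat -> ideal).

Lemma prod_ideal0 : prod_ideal m Q 0.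
Proof. by exists 0%N, (fun _ _ => 0); rewrite big_ord0; split. Qed.

Lemma prod_ideal_prod (b : nat -> {poly int}) : (forall j, (j < m)%N -> Q j (b j)) ->
  prod_ideal m Q (\prod_(j < m) b j).
Proof. by move=> Qb; exists 1%N, (fun _ => b); split=> [k j _ /Qb|]; rewrite ?big_ord1. Qed.

Lemma prod_idealD (f g : {poly int}) :
  prod_ideal m Q f -> prod_ideal m Q g -> prod_ideal m Q (f + g).
Proof.
move=> [N [a [Qa ->]]] [M [b [Qb ->]]].
exists (N + M)%N, (fun k => if (k < N)%N then a k else b (k - N)%N); split.
  move=> k j lt_kNM lt_jm; case: ifP => [lt_kN|/negbT]; first exact: Qa.
  by rewrite -leqNgt => le_Nk; apply: Qb; rewrite // ltn_subLR.
rewrite big_split_ord /=; congr (_ + _); apply: eq_bigr => k _.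
  by rewrite ltn_ord.
by rewrite ltnNge leq_addr /= addKn.
Qed.

Lemma prod_ideal_sub (f : {poly int}) : (forall j, is_ideal (Q j)) ->
  prod_ideal m Q f -> forall j, (j < m)%N -> Q j f.
Proof.
move=> idQ [N [a [Qa ->]]] j lt_jm; have [Q0 [QD QM]] := idQ j.
apply: (big_ind (Q j)) => // k _.
by rewrite (bigD1 (Ordinal lt_jm)) //= mulrC; apply/QM/Qa.
Qed.

End ProductIdeal.

Lemma prod_single (R : comRingType) (m j : nat) (x : R) (F : nat -> R) : (j < m)%N ->
  \prod_(k < m) (if k == j :> nat then x else F k) = x * \prod_(k < m | k != j :> nat) F k.
Proof.
move=> lt_jm; rewrite (bigD1 (Ordinal lt_jm)) //= eqxx; congr (_ * _).
by apply: eq_big => // k neq_kj; rewrite ifF //; apply: negbTE.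
Qed.

Section Decomposition.

Variables p n : nat.
Hypothesis p_prime : prime p.
Hypothesis n_gt0 : (0 < n)%N.

(* With s the indicator sum and g = 1 - s, the geometric series gives
   1 = s * h + g^(p-1); multiplying by f writes f as a sum of products of
   one element from each class ideal. *)
Lemma class_ideals_prod (f : {poly int}) :
  (forall r, (r < p)%N -> class_ideal p n r f) -> prod_ideal p (class_ideal p n) f.
Proof.
move=> Cf; set s := indicator_sum p n; set g := 1 - s.
set h := \sum_(i < p.-1) g ^+ i.
have one : 1 = s * h + g ^+ p.-1.
  have gs : 1 - g = s by rewrite /g opprB addrC subrK.
  have := subrXX 1 g p.-1; rewrite expr1n gs.
  under eq_bigr do rewrite expr1n mul1r.
  by move=> <-; rewrite subrK.
have -> : f = \sum_(j < p) (h * f) * class_indicator p n j + f * g ^+ p.-1.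
  by rewrite -mulr_sumr -/(indicator_sum p n) -/s {1}[f](esym (mulr1 f)) one; ring.
have p_gt0 := prime_gt0 p_prime; have Cg := indicator_sum_complement p_prime n_gt0.
apply: prod_idealD; first apply: (big_ind (prod_ideal p (class_ideal p n))).
- exact: prod_ideal0.
- exact: prod_idealD.
- move=> j _; rewrite /class_indicator -prod_single //.
  apply: (prod_ideal_prod (b := fun k => if k == j :> nat then h * f else class_factor p n k)).
  move=> k lt_kp; case: ifP => _; last exact: class_factor_in.
  by have [_ [_ CM]] := class_ideal_is_ideal p n k; apply/CM/Cf.
have card_nz : #|[pred k : 'I_p | k != 0%N :> nat]| = p.-1.
  by have := cardC1 (Ordinal p_gt0); rewrite card_ord => <-; apply: eq_card.
have -> : f * g ^+ p.-1 = \prod_(k < p) (if k == 0%N :> nat then f else g).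
  by rewrite (@prod_single _ p 0 f (fun=> g)) // prodr_const card_nz.
apply: (prod_ideal_prod (b := fun k => if k == 0%N then f else g)) => k lt_kp.
by case: ifP => _; [exact: Cf | exact: Cg].
Qed.

Lemma I_pn_classes (f : {poly int}) :
  I_pn p n f <-> forall j, (j < p)%N -> class_ideal p n j f.
Proof.
split=> [If j _ a _|Cf a]; first exact: If.
have [j lt_jp paj] := exists_residue a (prime_gt0 p_prime).
exact: Cf paj.
Qed.

(* X - j lies in the radical (p, X - j) of the j-th component only. *)
Lemma class_radicals_distinct (j k : nat) : (j < p)%N -> (k < p)%N -> j != k ->
  ~ (forall f, radical (class_ideal p n j) f <-> radical (class_ideal p n k) f).
Proof.
move=> lt_jp lt_kp neq_jk same; have /same : radical (class_ideal p n j) ('X - (j%:Z)%:P).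
  by rewrite class_ideal_radical // /eval_ideal hornerXsubC subrr dvdz0.
rewrite class_ideal_radical // /eval_ideal hornerXsubC; apply/negP.
by rewrite (residues_distinct lt_kp lt_jp) ?subrr ?dvdz0 // eq_sym.
Qed.

(* The indicator of class j lies in all other components but not in the
   j-th one, so no component can be omitted. *)
Lemma class_ideal_irredundant (j : nat) : (j < p)%N ->
  ~ (forall f, (forall k, (k < p)%N -> k <> j -> class_ideal p n k f) -> class_ideal p n j f).
Proof.
move=> lt_jp irr; apply: (class_indicator_notin p_prime n_gt0 lt_jp).
by apply: irr => k lt_kp /eqP; apply: class_indicator_other.
Qed.

End Decomposition.

Theorem mainTheorem8 (p n : nat) (hp : prime p) (hn : (0 < n)%N) :
  (forall f, I_pn p n f <->
     forall i : nat, (i < p ^ n)%N -> ideal2 (p ^ n)%N%:Z i%:Z f) /\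
  (forall f, I_pn p n f <-> forall j : nat, (j < p)%N -> Q_ p n j f) /\
  (forall f, I_pn p n f <-> prod_ideal p (Q_ p n) f) /\
  (forall j : nat, (j < p)%N -> primary_for (M_ p j) (Q_ p n j)) /\
  (forall j : nat, (j < p)%N -> maximal_ideal (M_ p j)) /\
  min_primary_decomp (I_pn p n) p (Q_ p n).
Proof.
have p_gt0 := prime_gt0 hp.
have -> : Q_ p n = class_ideal p n.
  by apply: functional_extensionality => j; apply: Q_E.
have -> : M_ p = eval_ideal p by apply: functional_extensionality => j; apply: M_E.
have Iclasses := @I_pn_classes p n hp.
split; first by move=> f; apply: values_dvdE; rewrite expn_gt0 p_gt0.
split=> //; split.
  move=> f; rewrite Iclasses; split; first exact: class_ideals_prod.
  by apply: prod_ideal_sub => j; apply: class_ideal_is_ideal.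
split.
  by move=> j _; split=> [|f]; [apply: class_ideal_primary | apply: class_ideal_radical].
split; first by move=> j _; apply: eval_ideal_maximal.
split=> //; split; first by move=> j _; apply: class_ideal_primary.
split; last exact: class_ideal_irredundant.
move=> j k lt_jk lt_kp; apply: class_radicals_distinct => //.
  exact: ltn_trans lt_kp.
by rewrite ltn_eqF.
Qed.
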